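(* Let $L$ be a Skolem-free first-order language, $T$ an $L$ theory and $\Gamma$ a set of $L$ formulas. Then $\mathrm{GSI}^\omega_\Gamma(\mathit{sk}^\exists(T))$ is inconsistent if and only if $T+\mathrm{IND}(\Gamma)$ is inconsistent.
   Context: Skolem symbols $\mathfrak{s}_{Qx\varphi}$: for each formula $Qx\varphi$ ($Q\in\{\forall,\exists\}$) a new function symbol of arity $|\mathrm{FV}(Qx\varphi)|$; $L$ is Skolem-free if it contains none of the Skolem symbols obtainable (iteratively) over $L$. $\mathit{sk}^\exists$/$\mathit{sk}^\forall$: $\mathit{sk}^Q$ fixes atoms, commutes with $\wedge,\vee$, $\mathit{sk}^Q(\neg A)=\neg\mathit{sk}^{\overline Q}(A)$, $\mathit{sk}^Q(QxA(x,\vec y))=\mathit{sk}^Q(A(\mathfrak{s}_{QxA}(\vec y),\vec y))$ with $\vec y$ exactly the free variables of $QxA$, $\mathit{sk}^Q(\overline QxA)=\overline Qx\,\mathit{sk}^Q(A)$; elementwise on theories. $I_x\varphi=\forall\vec z(\varphi(0,\vec z)\wedge\forall x(\varphi(x,\vec z)\to\varphi(s(x),\vec z))\to\forall x\varphi(x,\vec z))$, $\mathrm{IND}(\Gamma)=\{I_x\gamma:\gamma\in\Gamma\}$. $\Gamma\downarrow L'=\{\gamma(\vec x,t_1,\dots,t_n):\gamma(\vec x,z_1,\dots,z_n)\in\Gamma,\ t_i$ ground $L'$ terms$\}$; $\Delta^-$ = formulas of $\Delta$ with at most one free variable; $\mathrm{GSI}_\Gamma(T)=T+\mathit{sk}^\exists(\mathrm{IND}((\Gamma\downarrow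 L(T))^-))$, $\mathrm{GSI}^\omega_\Gamma(T)=\bigcup_i\mathrm{GSI}^i_\Gamma(T)$. *)

From Stdlib Require List.
From mathcomp Require Import all_boot.

Set Implicit Arguments.
Unset Strict Implicit.
Unset Printing Implicit Defensive.

(* Function symbols are either base symbols [FB name arity] or
   Skolem symbols [FSk q A] = s_{Q x A}, where [q = true] means Q = exists,
   [q = false] means Q = forall, and [A] is the body of the quantified
   formula (de Bruijn: the bound variable x is index 0).
   Predicate symbols are [Pr name arity args]; equality is logical. *)
Inductive fsym : Type :=
  | FB : nat -> nat -> fsym
  | FSk : bool -> form -> fsym
with term : Type :=
  | Var : nat -> term
  | App : fsym -> list term -> term
with form : Type :=
  | Eq : term -> term -> form
  | Pr : nat -> nat -> list term -> form
  | Neg : form -> form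
  | And : form -> form -> form
  | Or : form -> form -> form
  | All : form -> form
  | Ex : form -> form.

Definition Qnt (q : bool) (A : form) : form := if q then Ex A else All A.
Definition Imp (A B : form) : form := Or (Neg A) B.

Definition zero : fsym := FB 0 0.
Definition succ : fsym := FB 1 1.
Definition Tzero : term := App zero [::].
Definition Ts (t : term) : term := App succ [:: t].

Fixpoint fv_term (t : term) : seq nat :=
  match t with
  | Var i => [:: i]
  | App _ ts =>
      (fix fvl (l : list term) : seq nat :=
         match l with [::] => [::] | u :: l' => fv_term u ++ fvl l' end) ts
  end.

Definition fv_terms (ts : list term) : seq nat := flatten (map fv_term ts).

Fixpoint fv_form (A : form) : seq nat :=
  match A with
  | Eq t u => fv_term t ++ fv_term u
  | Pr _ _ ts => fv_terms ts
  | Neg B => fv_form B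
  | And B C | Or B C => fv_form B ++ fv_form C
  | All B | Ex B => [seq i.-1 | i <- fv_form B & i != 0]
  end.

Definition fvs (A : form) : seq nat := sort leq (undup (fv_form A)).

Definition arity (f : fsym) : nat :=
  match f with
  | FB _ a => a
  | FSk q A => size (fvs (Qnt q A))
  end.

Fixpoint tsubst (s : nat -> term) (t : term) : term :=
  match t with
  | Var i => s i
  | App f ts =>
      App f ((fix tsl (l : list term) : list term :=
                match l with [::] => [::] | u :: l' => tsubst s u :: tsl l' end) ts)
  end.

Definition up (s : nat -> term) : nat -> term :=
  fun i => if i is j.+1 then tsubst (fun k => Var k.+1) (s j) else Var 0.

Fixpoint fsubst (s : nat -> term) (A : form) : form :=
  match A with
  | Eq t u => Eq (tsubst s t) (tsubst s u)
  | Pr p a ts => Pr p a (map (tsubst s) ts)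
  | Neg B => Neg (fsubst s B)
  | And B C => And (fsubst s B) (fsubst s C)
  | Or B C => Or (fsubst s B) (fsubst s C)
  | All B => All (fsubst (up s) B)
  | Ex B => Ex (fsubst (up s) B)
  end.

(* A[t/x] where x is the variable bound by a quantifier over A *)
Definition inst (A : form) (t : term) : form :=
  fsubst (fun i => if i is j.+1 then Var j else t) A.

Definition skterm (q : bool) (A : form) : term :=
  App (FSk q A) [seq Var i | i <- fvs (Qnt q A)].

Fixpoint fsize (A : form) : nat :=
  match A with
  | Eq _ _ | Pr _ _ _ => 0
  | Neg B | All B | Ex B => (fsize B).+1
  | And B C | Or B C => (fsize B + fsize C).+1
  end.

(* [skf n q A] computes sk^Q(A) (q = true: sk^exists, q = false: sk^forall)
   given enough fuel n; substitution of terms does not change [fsize],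
   so fuel [fsize A] suffices. *)
Fixpoint skf (n : nat) (q : bool) (A : form) : form :=
  match n with
  | 0 => A
  | n'.+1 =>
    match A with
    | Eq _ _ | Pr _ _ _ => A
    | Neg B => Neg (skf n' (~~ q) B)
    | And B C => And (skf n' q B) (skf n' q C)
    | Or B C => Or (skf n' q B) (skf n' q C)
    | All B => if q then All (skf n' q B) else skf n' q (inst B (skterm false B))
    | Ex B => if q then skf n' q (inst B (skterm true B)) else Ex (skf n' q B)
    end
  end.

Definition sk (q : bool) (A : form) : form := skf (fsize A) q A.

Definition skE (X : form -> Prop) : form -> Prop :=
  fun B => exists A, X A /\ B = sk true A.

Record lang := Lang { lfun : fsym -> Prop; lpred : nat -> nat -> Prop }.

Fixpoint term_over (F : fsym -> Prop) (t : term) : Prop :=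
  match t with
  | Var _ => True
  | App f ts =>
      F f /\ size ts = arity f /\
      (fix tol (l : list term) : Prop :=
         match l with [::] => True | u :: l' => term_over F u /\ tol l' end) ts
  end.

Fixpoint form_over (L : lang) (A : form) : Prop :=
  match A with
  | Eq t u => term_over (lfun L) t /\ term_over (lfun L) u
  | Pr p a ts => lpred L p a /\ size ts = a /\ (forall t, List.In t ts -> term_over (lfun L) t)
  | Neg B => form_over L B
  | And B C | Or B C => form_over L B /\ form_over L C
  | All B | Ex B => form_over L B
  end.

Fixpoint skclos (L : lang) (n : nat) : lang :=
  match n with
  | 0 => L
  | n'.+1 =>
      Lang (fun f => lfun (skclos L n') f \/
                     exists q A, f = FSk q A /\ form_over (skclos L n') (Qnt q A))
           (lpred L)
  end.

Definition obtainable_skolem (L : lang) (f : fsym) : Prop :=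
  exists n q A, f = FSk q A /\ form_over (skclos L n) (Qnt q A).

Definition skolem_free (L : lang) : Prop :=
  forall f, lfun L f -> ~ obtainable_skolem L f.

Definition sentence (A : form) : Prop := fv_form A = [::].

(* I_x phi, x = variable k: phi' is phi with x moved to index 0 *)
Definition ind_body (phi : form) (k : nat) : form :=
  let phi' := fsubst (fun i => if i == k then Var 0 else Var i.+1) phi in
  Imp (And (inst phi' Tzero)
           (All (Imp phi' (fsubst (fun i => if i is j.+1 then Var j.+1 else Ts (Var 0)) phi'))))
      (All phi').

Definition closeAll (n : nat) (A : form) : form := iter n All A.

Definition Ix (phi : form) (k : nat) : form :=
  let B := ind_body phi k in closeAll (\max_(i <- fv_form B) i.+1) B.

Definition IND (G : form -> Prop) : form -> Prop :=
  fun A => exists phi k, G phi /\ A = Ix phi k.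

Record theory := Theory { tfun : fsym -> Prop; tax : form -> Prop }.

Fixpoint occurs_term (f : fsym) (t : term) : Prop :=
  match t with
  | Var _ => False
  | App g ts =>
      g = f \/
      (fix ol (l : list term) : Prop :=
         match l with [::] => False | u :: l' => occurs_term f u \/ ol l' end) ts
  end.

Fixpoint occurs_form (f : fsym) (A : form) : Prop :=
  match A with
  | Eq t u => occurs_term f t \/ occurs_term f u
  | Pr _ _ ts => exists t, List.In t ts /\ occurs_term f t
  | Neg B => occurs_form f B
  | And B C | Or B C => occurs_form f B \/ occurs_form f C
  | All B | Ex B => occurs_form f B
  end.

Definition extend (T : theory) (X : form -> Prop) : theory :=
  Theory (fun f => tfun T f \/ exists A, X A /\ occurs_form f A)
         (fun A => tax T A \/ X A).

Definition ground_over (F : fsym -> Prop) (t : term) : Prop :=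
  fv_term t = [::] /\ term_over F t.

Definition down (G : form -> Prop) (F : fsym -> Prop) : form -> Prop :=
  fun A => exists g (s : nat -> term),
    G g /\ (forall i, s i = Var i \/ ground_over F (s i)) /\ A = fsubst s g.

Definition minus (D : form -> Prop) : form -> Prop :=
  fun A => D A /\ size (undup (fv_form A)) <= 1.

Definition GSI (G : form -> Prop) (T : theory) : theory :=
  extend T (skE (IND (minus (down G (tfun T))))).

Definition GSIn (G : form -> Prop) (n : nat) (T : theory) : theory := iter n (GSI G) T.

Definition GSIomega (G : form -> Prop) (T : theory) : form -> Prop :=
  fun A => exists n, tax (GSIn G n T) A.

Definition skT (L : lang) (T : form -> Prop) : theory :=
  extend (Theory (lfun L) (fun _ => False)) (skE T).

Record structure := Structure {
  dom : Type;
  inhab : dom;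
  ifun : fsym -> seq dom -> dom;
  ipred : nat -> nat -> seq dom -> Prop }.

Fixpoint eval (M : structure) (rho : nat -> dom M) (t : term) : dom M :=
  match t with
  | Var i => rho i
  | App f ts =>
      @ifun M f ((fix el (l : list term) : seq (dom M) :=
                   match l with [::] => [::] | u :: l' => eval rho u :: el l' end) ts)
  end.

Definition scons (M : structure) (d : dom M) (rho : nat -> dom M) : nat -> dom M :=
  fun i => if i is j.+1 then rho j else d.

Fixpoint sat (M : structure) (rho : nat -> dom M) (A : form) : Prop :=
  match A with
  | Eq t u => eval rho t = eval rho u
  | Pr p a ts => @ipred M p a (map (eval rho) ts)
  | Neg B => ~ sat rho B
  | And B C => sat rho B /\ sat rho C
  | Or B C => sat rho B \/ sat rho C
  | All B => forall d, sat (scons d rho) B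
  | Ex B => exists d, sat (scons d rho) B
  end.

Definition consistent (X : form -> Prop) : Prop :=
  exists M : structure, forall A, X A -> forall rho : nat -> dom M, sat rho A.

Definition inconsistent (X : form -> Prop) : Prop := ~ consistent X.

From Pilot Require Import Defs.
From mathcomp Require Import all_boot zify.
From Stdlib Require Import Classical ClassicalEpsilon.
From Stdlib Require List.

(* If M is a model of T + IND(Gamma), expand it by interpreting each Skolem
   symbol that is not in L by a choice of witness (or counterexample) in the
   expansion itself. As L is Skolem-free, these are all the Skolem symbols of
   the iterated Skolem hull of L, so over that hull sk^exists(A) and A agree
   in the expansion. Hence it satisfies sk^exists(T), and also every new GSI
   axiom: such an axiom Skolemizes an induction axiom whose parameters are
   ground terms, and M satisfies the induction axiom of the original formula.

   Conversely, if M is a model of GSI^omega, let N be the substructure of the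
   elements named by ground terms of the GSI theories. Each axiom sk^exists(A)
   is universal, hence true in N, and it implies A; so N satisfies T. For
   induction on gamma at an assignment, name every parameter value by a ground
   term: the instance has at most one free variable, so its Skolemized
   induction axiom belongs to GSI^omega and holds in N, and it is exactly the
   induction for gamma at that assignment. *)

Set Implicit Arguments.
Unset Strict Implicit.
Unset Printing Implicit Defensive.

Section NestedTermInd.
Variables (P : term -> Prop) (P_Var : forall i, P (Var i))
  (P_App : forall f ts, (forall u, List.In u ts -> P u) -> P (App f ts)).

Fixpoint term_nested_ind (t : term) : P t :=
  match t with
  | Var i => P_Var i
  | App f ts => P_App f
      ((fix go (l : list term) : forall u, List.In u l -> P u :=
         match l with
         | nil => fun u (H : List.In u nil) => False_ind _ H
         | cons v l' => fun u H => match H with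
             | or_introl e => eq_ind v P (term_nested_ind v) u e
             | or_intror H' => go l' u H' end
         end) ts)
  end.
End NestedTermInd.

Lemma map_ext_In A B (f g : A -> B) (l : seq A) :
  (forall a, List.In a l -> f a = g a) -> map f l = map g l.
Proof. exact: List.map_ext_in. Qed.

Lemma mem_In (T : eqType) (x : T) s : x \in s -> List.In x s.
Proof. by elim: s => //= y s IH; rewrite inE => /orP [/eqP ->|/IH]; [left | right]. Qed.

Lemma In_map_inv A B (f : A -> B) l u :
  List.In u (map f l) -> exists2 v, List.In v l & u = f v.
Proof. by case/List.in_map_iff => v [<- Hv]; exists v. Qed.

Lemma size_undup_le1 (T : eqType) (s : seq T) x :
  {subset s <= [:: x]} -> size (undup s) <= 1.
Proof.
move=> Hs; rewrite -(size_nseq 1 x); apply: uniq_leq_size; first exact: undup_uniq.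
by move=> y; rewrite mem_undup => /Hs.
Qed.

Lemma eventually_forall_In A (l : seq A) (Q : nat -> A -> Prop) :
  (forall n m x, n <= m -> Q n x -> Q m x) ->
  (forall x, List.In x l -> exists n, Q n x) -> exists n, forall x, List.In x l -> Q n x.
Proof.
move=> Qmono; elim: l => [|a l IH] H; first by exists 0.
have [n1 H1] := H a (or_introl erefl).
have [|n2 H2] := IH; first by move=> x Hx; apply: H; right.
exists (maxn n1 n2) => x /= [<-|Hx]; first by apply: Qmono H1; rewrite leq_maxl.
by apply: Qmono (H2 x Hx); rewrite leq_maxr.
Qed.

Lemma tsubst_App s f ts : tsubst s (App f ts) = App f (map (tsubst s) ts).
Proof. by rewrite /=; congr App; elim: ts => //= u l ->. Qed.

Lemma fv_term_App f ts : fv_term (App f ts) = fv_terms ts.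
Proof. by rewrite /= /fv_terms; elim: ts => //= u l ->. Qed.

Lemma mem_fv_terms i ts :
  i \in fv_terms ts <-> exists2 u, List.In u ts & i \in fv_term u.
Proof.
rewrite /fv_terms; elim: ts => [|u l IH] /=; first by split=> // -[].
rewrite mem_cat; split.
  by case/orP=> [Hi|/IH [v Hv Hi]]; [exists u; first left | exists v; first right].
by case=> v [<-|Hv] Hi; apply/orP; [left | right; apply/IH; exists v].
Qed.

Lemma term_over_App F f ts : term_over F (App f ts) <->
  [/\ F f, size ts = arity f & forall u, List.In u ts -> term_over F u].
Proof.
have E : forall l : list term,
    (fix tol l := match l with [::] => True | u :: l' => term_over F u /\ tol l' end) l
    <-> (forall u, List.In u l -> term_over F u).
  elim=> [|u l IH]; first by split=> // _ u [].
  split=> [[Hu /IH Hl] v [<-|/Hl] | H] //.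
  by split=> [|]; [apply: H; left | apply/IH => v Hv; apply: H; right].
by split=> [[Hf [Hs /E H]] | [Hf Hs /E H]].
Qed.

Lemma occurs_term_App f g ts : occurs_term f (App g ts) <->
  g = f \/ exists2 u, List.In u ts & occurs_term f u.
Proof.
have E : forall l : list term,
    (fix ol l := match l with [::] => False | u :: l' => occurs_term f u \/ ol l' end) l
    <-> exists2 u, List.In u l & occurs_term f u.
  elim=> [|u l IH]; first by split=> // -[].
  split=> [[Hu|/IH [v Hv Hf]] | [v [<-|Hv] Hf]].
  - by exists u; first left.
  - by exists v; first right.
  - by left.
  - by right; apply/IH; exists v.
by split=> [[->|/E H]|[->|/E H]]; [left | right | left | right].
Qed.

Lemma eval_App (M : structure) (rho : nat -> dom M) f ts :
  eval rho (App f ts) = ifun f (map (eval rho) ts).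
Proof. by rewrite /=; congr ifun; elim: ts => //= u l ->. Qed.

Lemma mem_fv_bind j B :
  (j \in [seq i.-1 | i <- fv_form B & i != 0]) = (j.+1 \in fv_form B).
Proof.
apply/mapP/idP => [[[|i]] | Hj]; last by exists j.+1; rewrite ?mem_filter.
  by rewrite mem_filter.
by rewrite mem_filter => /andP [_ Hi] ->.
Qed.

Lemma mem_fv_Qnt j q B : (j \in fv_form (Qnt q B)) = (j.+1 \in fv_form B).
Proof. by case: q; apply: mem_fv_bind. Qed.

Lemma mem_fvs i A : (i \in fvs A) = (i \in fv_form A).
Proof. by rewrite /fvs mem_sort mem_undup. Qed.

Lemma fv_tsubst i s t :
  i \in fv_term (tsubst s t) -> exists2 j, j \in fv_term t & i \in fv_term (s j).
Proof.
elim/term_nested_ind: t => [j|f ts IH]; first by exists j; rewrite ?inE.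
rewrite tsubst_App !fv_term_App => /mem_fv_terms [_ /(In_map_inv (f := tsubst s)) [u Hu ->]].
case/(IH u Hu) => j Hj Hij; exists j => //; apply/mem_fv_terms; by exists u.
Qed.

Lemma fv_fsubst i s A :
  i \in fv_form (fsubst s A) -> exists2 j, j \in fv_form A & i \in fv_term (s j).
Proof.
elim: A i s => /= [t u|p a ts|B IH|B IHB C IHC|B IHB C IHC|B IH|B IH] i s.
- by rewrite !mem_cat => /orP [|] /fv_tsubst [j Hj Hi]; exists j; rewrite // mem_cat Hj ?orbT.
- case/mem_fv_terms=> _ /(In_map_inv (f := tsubst s)) [u Hu ->] /fv_tsubst [j Hj Hi].
  by exists j => //; apply/mem_fv_terms; exists u.
- exact: IH.
- by rewrite !mem_cat => /orP [/IHB|/IHC] [j Hj Hi]; exists j; rewrite // mem_cat Hj ?orbT.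
- by rewrite !mem_cat => /orP [/IHB|/IHC] [j Hj Hi]; exists j; rewrite // mem_cat Hj ?orbT.
- rewrite mem_fv_bind => /IH [[|j] Hj] /=; first by rewrite inE.
  case/fv_tsubst=> l Hl; rewrite inE => /eqP [El]; subst l.
  by exists j; rewrite ?mem_fv_bind.
- rewrite mem_fv_bind => /IH [[|j] Hj] /=; first by rewrite inE.
  case/fv_tsubst=> l Hl; rewrite inE => /eqP [El]; subst l.
  by exists j; rewrite ?mem_fv_bind.
Qed.

Section Semantics.
Variable M : structure.
Implicit Types (rho : nat -> dom M) (d : dom M).

Lemma eval_eq_on_fv t rho rho' :
  {in fv_term t, rho =1 rho'} -> eval rho t = eval rho' t.
Proof.
elim/term_nested_ind: t rho rho' => [i|f ts IH] rho rho' H.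
  by apply: H; rewrite inE.
rewrite !eval_App; congr ifun; apply: map_ext_In => u Hu.
by apply: IH => // i Hi; apply: H; rewrite fv_term_App; apply/mem_fv_terms; exists u.
Qed.

Lemma eval_ground t rho rho' : fv_term t = [::] -> eval rho t = eval rho' t.
Proof. by move=> Ht; apply: eval_eq_on_fv => i; rewrite Ht. Qed.

Lemma sat_eq_on_fv A rho rho' :
  {in fv_form A, rho =1 rho'} -> (sat rho A <-> sat rho' A).
Proof.
elim: A rho rho' => /= [t u|p a ts|B IH|B IHB C IHC|B IHB C IHC|B IH|B IH] rho rho' H.
- by rewrite !(@eval_eq_on_fv _ rho rho') // => i Hi; apply: H; rewrite mem_cat Hi ?orbT.
- rewrite (@map_ext_In _ _ (eval rho) (eval rho')) // => u Hu.
  by apply: eval_eq_on_fv => i Hi; apply: H; apply/mem_fv_terms; exists u.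
- by rewrite (IH rho rho').
- by rewrite (IHB rho rho') ?(IHC rho rho') // => i Hi; apply: H; rewrite mem_cat Hi ?orbT.
- by rewrite (IHB rho rho') ?(IHC rho rho') // => i Hi; apply: H; rewrite mem_cat Hi ?orbT.
- have E d : sat (scons d rho) B <-> sat (scons d rho') B.
    by apply: IH => -[|j] //= Hj; apply: H; rewrite mem_fv_bind.
  by split=> Hd d; apply/E.
- have E d : sat (scons d rho) B <-> sat (scons d rho') B.
    by apply: IH => -[|j] //= Hj; apply: H; rewrite mem_fv_bind.
  by split=> -[d Hd]; exists d; apply/E.
Qed.

Lemma sat_ext A rho rho' : rho =1 rho' -> (sat rho A <-> sat rho' A).
Proof. by move=> H; apply: sat_eq_on_fv => i _. Qed.

Lemma eval_tsubst s t rho : eval rho (tsubst s t) = eval (fun i => eval rho (s i)) t.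
Proof.
elim/term_nested_ind: t => [i|f ts IH] //.
by rewrite tsubst_App !eval_App -map_comp; congr ifun; apply: map_ext_In.
Qed.

Lemma sat_fsubst A s rho : sat rho (fsubst s A) <-> sat (fun i => eval rho (s i)) A.
Proof.
elim: A s rho => /= [t u|p a ts|B IH|B IHB C IHC|B IHB C IHC|B IH|B IH] s rho.
- by rewrite !eval_tsubst.
- rewrite -map_comp (@map_ext_In _ _ _ (eval (fun i => eval rho (s i)))) // => u _.
  exact: eval_tsubst.
- by rewrite IH.
- by rewrite IHB IHC.
- by rewrite IHB IHC.
- have E d : sat (scons d rho) (fsubst (up s) B) <->
             sat (scons d (fun i => eval rho (s i))) B.
    by rewrite IH; apply: sat_ext => -[|j] //=; rewrite eval_tsubst.
  by split=> Hd d; apply/E.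
- have E d : sat (scons d rho) (fsubst (up s) B) <->
             sat (scons d (fun i => eval rho (s i))) B.
    by rewrite IH; apply: sat_ext => -[|j] //=; rewrite eval_tsubst.
  by split=> -[d Hd]; exists d; apply/E.
Qed.

Lemma sat_inst B t rho : sat rho (inst B t) <-> sat (scons (eval rho t) rho) B.
Proof. by rewrite /inst sat_fsubst; apply: sat_ext => -[]. Qed.

End Semantics.

(** * Soundness of Skolemization *)

Lemma fsize_fsubst A s : fsize (fsubst s A) = fsize A.
Proof.
by elim: A s => //= [B IH|B IHB C IHC|B IHB C IHC|B IH|B IH] s; rewrite ?IH ?IHB ?IHC.
Qed.

Lemma skf_sound (M : structure) n q A (rho : nat -> dom M) :
  if q then sat rho (skf n q A) -> sat rho A else sat rho A -> sat rho (skf n q A).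
Proof.
elim: n q A rho => [|n IH] q A rho; first by case: q.
case: A => [t u|p a ts|B|B C|B C|B|B] /=; case: q => //=.
- by move=> H /(IH false); apply: H.
- by move=> H /(IH true); apply: H.
- by case=> /(IH true) H1 /(IH true) H2.
- by case=> /(IH false) H1 /(IH false) H2.
- by case=> /(IH true) H; [left | right].
- by case=> /(IH false) H; [left | right].
- by move=> H d; apply: (IH true); apply: H.
- by move=> H; apply: (IH false); apply/sat_inst.
- by move=> /(IH true) /sat_inst H; eexists; exact: H.
- by case=> d /(IH false) H; exists d.
Qed.

Lemma sat_sk (M : structure) A (rho : nat -> dom M) : sat rho (sk true A) -> sat rho A.
Proof. exact: (skf_sound _ true). Qed.

(* [universal true A]: every [All] of [A] occurs positively and every [Ex]
   negatively; [universal false A] is the dual, existential, condition. *)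
Fixpoint universal (b : bool) (A : form) : bool :=
  match A with
  | Eq _ _ | Pr _ _ _ => true
  | Neg B => universal (~~ b) B
  | And B C | Or B C => universal b B && universal b C
  | All B => b && universal b B
  | Ex B => ~~ b && universal b B
  end.

Lemma universal_skf n q A : fsize A <= n -> universal q (skf n q A).
Proof.
elim: n q A => [|n IH] q A; first by case: A.
case: A => [t u|p a ts|B|B C|B C|B|B] //= Hs.
- by rewrite IH.
- by rewrite !IH //; lia.
- by rewrite !IH //; lia.
- by case: q; rewrite /= IH // /inst fsize_fsubst.
- by case: q; rewrite /= IH // /inst fsize_fsubst.
Qed.

(** * Languages and the Skolem hull *)

Lemma term_over_mono (F F' : Defs.fsym -> Prop) t :
  (forall f, F f -> F' f) -> term_over F t -> term_over F' t.
Proof.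
move=> HF; elim/term_nested_ind: t => [i|f ts IH] // /term_over_App [Hf Hs H].
by apply/term_over_App; split=> [|//|u Hu]; [exact: HF | exact: IH (H u Hu)].
Qed.

Lemma form_over_mono (L1 L2 : lang) A :
  (forall f, lfun L1 f -> lfun L2 f) -> (forall p a, lpred L1 p a -> lpred L2 p a) ->
  form_over L1 A -> form_over L2 A.
Proof.
move=> HF HP; elim: A => /= [t u|p a ts|B IH|B IHB C IHC|B IHB C IHC|B IH|B IH] //;
  try tauto.
- by case=> Ht Hu; split; apply: term_over_mono HF _.
- by case=> Hp [Ha H]; split; [exact: HP | split=> // t Ht; apply: term_over_mono HF (H t Ht)].
Qed.

Lemma tsubst_over (F : Defs.fsym -> Prop) s t :
  term_over F t -> {in fv_term t, forall i, term_over F (s i)} ->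
  term_over F (tsubst s t).
Proof.
elim/term_nested_ind: t => [i|f ts IH]; first by move=> _; apply; rewrite inE.
move=> /term_over_App [Hf Hs H] Hsub; rewrite tsubst_App; apply/term_over_App.
split=> //; first by rewrite size_map.
move=> w /(In_map_inv (f := tsubst s)) [u Hu ->]; apply: IH (H u Hu) _ => // i Hi.
by apply: Hsub; rewrite fv_term_App; apply/mem_fv_terms; exists u.
Qed.

Lemma fsubst_over (L : lang) A s :
  form_over L A -> {in fv_form A, forall i, term_over (lfun L) (s i)} ->
  form_over L (fsubst s A).
Proof.
elim: A s => /= [t u|p a ts|B IH|B IHB C IHC|B IHB C IHC|B IH|B IH] s.
- case=> Ht Hu Hs.
  by split; apply: tsubst_over => // i Hi; apply: Hs; rewrite mem_cat Hi ?orbT.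
- case=> Hp [Ha H] Hs; split=> //; split; first by rewrite size_map.
  move=> w /(In_map_inv (f := tsubst s)) [u Hu ->]; apply: tsubst_over (H u Hu) _ => i Hi.
  by apply: Hs; apply/mem_fv_terms; exists u.
- exact: IH.
- case=> HB HC Hs; split; [apply: IHB | apply: IHC] => // i Hi;
    by apply: Hs; rewrite mem_cat Hi ?orbT.
- case=> HB HC Hs; split; [apply: IHB | apply: IHC] => // i Hi;
    by apply: Hs; rewrite mem_cat Hi ?orbT.
- move=> HB Hs; apply: IH => // -[|j] Hj //=; apply: tsubst_over => //.
  by apply: Hs; rewrite mem_fv_bind.
- move=> HB Hs; apply: IH => // -[|j] Hj //=; apply: tsubst_over => //.
  by apply: Hs; rewrite mem_fv_bind.
Qed.

Lemma term_over_occurs (F : Defs.fsym -> Prop) f t :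
  occurs_term f t -> term_over F t -> F f.
Proof.
elim/term_nested_ind: t => [i|g ts IH] //.
by case/occurs_term_App=> [<-|[u Hu Ho]] /term_over_App [Hg _ H] //; exact: IH Hu Ho (H u Hu).
Qed.

Lemma form_over_occurs (L : lang) f A : occurs_form f A -> form_over L A -> lfun L f.
Proof.
elim: A => /= [t u|p a ts|B IH|B IHB C IHC|B IHB C IHC|B IH|B IH]; try tauto.
- by case=> Ho [Ht Hu]; [exact: term_over_occurs Ho Ht | exact: term_over_occurs Ho Hu].
- by case=> t [Ht Ho] [_ [_ H]]; exact: term_over_occurs Ho (H t Ht).
Qed.

Lemma term_over_of_occurs (F1 F2 : Defs.fsym -> Prop) t :
  term_over F1 t -> (forall f, occurs_term f t -> F2 f) -> term_over F2 t.
Proof.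
elim/term_nested_ind: t => [i|g ts IH] // /term_over_App [_ Hs H] Ho.
apply/term_over_App; split=> //; first by apply: Ho; apply/occurs_term_App; left.
move=> u Hu; apply: IH (H u Hu) _ => // f Hf.
by apply: Ho; apply/occurs_term_App; right; exists u.
Qed.

Lemma form_over_of_occurs (L1 L2 : lang) A :
  (forall p a, lpred L1 p a -> lpred L2 p a) ->
  form_over L1 A -> (forall f, occurs_form f A -> lfun L2 f) -> form_over L2 A.
Proof.
move=> HP; elim: A => [t u|p a ts|B IH|B IHB C IHC|B IHB C IHC|B IH|B IH]; try by auto.
- case=> Ht Hu Ho.
  split; [apply: (term_over_of_occurs Ht) | apply: (term_over_of_occurs Hu)].
    by move=> f Hf; apply: Ho; left.
  by move=> f Hf; apply: Ho; right.
- case=> Hp [Ha H] Ho; split; first exact: HP.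
  by split=> // t Ht; apply: term_over_of_occurs (H t Ht) _ => f Hf; apply: Ho; exists t.
- by case=> HB HC Ho; split; [apply: IHB => // f Hf; apply: Ho; left
                              | apply: IHC => // f Hf; apply: Ho; right].
- by case=> HB HC Ho; split; [apply: IHB => // f Hf; apply: Ho; left
                              | apply: IHC => // f Hf; apply: Ho; right].
Qed.

Lemma skterm_over (F : Defs.fsym -> Prop) q B : F (FSk q B) -> term_over F (skterm q B).
Proof.
move=> H; apply/term_over_App; split=> //; first by rewrite size_map.
by move=> w /(In_map_inv (f := Var)) [v _ ->].
Qed.

Section SkolemHull.
Variable L : lang.

Lemma lpred_skclos n : lpred (skclos L n) = lpred L.
Proof. by case: n. Qed.

Lemma lfun_skclos_mono n m f : n <= m -> lfun (skclos L n) f -> lfun (skclos L m) f.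
Proof.
elim: m => [|m IH]; first by rewrite leqn0 => /eqP ->.
by rewrite leq_eqVlt => /orP [/eqP -> //|]; rewrite ltnS => /IH H /H; left.
Qed.

Lemma form_over_skclos_mono n m A :
  n <= m -> form_over (skclos L n) A -> form_over (skclos L m) A.
Proof.
move=> Hnm; apply: form_over_mono => [f|p a]; first exact: lfun_skclos_mono.
by rewrite !lpred_skclos.
Qed.

Lemma form_over_skclos n A : form_over L A -> form_over (skclos L n) A.
Proof. exact: (@form_over_skclos_mono 0). Qed.

Lemma inst_skterm_over_skclos n q B : form_over (skclos L n) (Qnt q B) ->
  form_over (skclos L n.+1) (inst B (skterm q B)).
Proof.
move=> HB; apply: fsubst_over => [|[|j] _ //=].
  by apply: (form_over_skclos_mono (leqnSn n)); case: q HB.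
by apply: skterm_over; right; exists q, B.
Qed.

Lemma skf_over_skclos fuel n q A : form_over (skclos L n) A ->
  form_over (skclos L (n + fuel)) (skf fuel q A).
Proof.
elim: fuel n q A => [|fuel IH] n q A; first by rewrite addn0.
have mono B : form_over (skclos L (n + fuel)) B -> form_over (skclos L (n + fuel.+1)) B.
  by apply: form_over_skclos_mono; rewrite addnS.
case: A => [t u|p a ts|B|B C|B C|B|B] HA;
  try by apply: (form_over_skclos_mono _ HA); rewrite leq_addr.
all: move: HA => /= HA.
- exact/mono/IH.
- by case: HA => HB HC; split; apply/mono/IH.
- by case: HA => HB HC; split; apply/mono/IH.
- case: q; first exact/mono/IH.
  by rewrite -addSnnS; apply/IH/(inst_skterm_over_skclos (q := false)).
- case: q; last exact/mono/IH.
  by rewrite -addSnnS; apply/IH/(inst_skterm_over_skclos (q := true)).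
Qed.

Lemma term_over_skclos (F : Defs.fsym -> Prop) t :
  (forall f, F f -> exists n, lfun (skclos L n) f) ->
  term_over F t -> exists n, term_over (lfun (skclos L n)) t.
Proof.
move=> HF; elim/term_nested_ind: t => [i|f ts IH]; first by exists 0.
case/term_over_App=> /HF [n1 Hf] Hs /(fun H u Hu => IH u Hu (H u Hu)) Hts.
have [n2 H2] := eventually_forall_In (Q := fun n u => term_over (lfun (skclos L n)) u)
  (fun n m u Hnm => term_over_mono (fun f => @lfun_skclos_mono n m f Hnm)) Hts.
exists (maxn n1 n2); apply/term_over_App; split=> //.
  by apply: lfun_skclos_mono Hf; rewrite leq_maxl.
move=> u Hu; apply: term_over_mono (H2 u Hu) => g; apply: lfun_skclos_mono.
exact: leq_maxr.
Qed.

Lemma skclos_Skolem_notin n q B :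
  skolem_free L -> form_over (skclos L n) (Qnt q B) -> ~ lfun L (FSk q B).
Proof. by move=> HL HB /HL; apply; exists n, q, B. Qed.

End SkolemHull.

Lemma Ix_over (L : lang) phi k :
  lfun L zero -> lfun L succ -> form_over L phi -> form_over L (Ix phi k).
Proof.
move=> Hz Hs Hphi.
have Hphi' : form_over L (fsubst (fun i => if i == k then Var 0 else Var i.+1) phi).
  by apply: fsubst_over => // i _ /=; case: ifP.
have Hbody : form_over L (ind_body phi k).
  split; [split; [|split]|] => //.
  - by apply: fsubst_over => // -[|i] _ //=.
  - by apply: fsubst_over => // -[|i] _ //=.
by rewrite /Ix; elim: (\max_(_ <- _) _).
Qed.

Section GSILanguage.
Variables (L : lang) (T G : form -> Prop).
Hypotheses (L_zero : lfun L zero) (L_succ : lfun L succ)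
  (T_over : forall A, T A -> form_over L A) (G_over : forall A, G A -> form_over L A).

Lemma Ix_instance_over_skclos (F : Defs.fsym -> Prop) g s k :
  (forall f, F f -> exists n, lfun (skclos L n) f) -> G g ->
  (forall i, s i = Var i \/ ground_over F (s i)) ->
  exists n, form_over (skclos L n) (Ix (fsubst s g) k).
Proof.
move=> HF Gg Hs.
have [|n Hn] := eventually_forall_In (l := fv_form g)
    (Q := fun n i => term_over (lfun (skclos L n)) (s i))
    (fun n m i Hnm => term_over_mono (fun f => @lfun_skclos_mono L n m f Hnm)).
  move=> i _; case: (Hs i) => [->|[_ Hi]]; first by exists 0.
  exact: term_over_skclos HF Hi.
exists n; apply: Ix_over; try exact: (@lfun_skclos_mono L 0).
by apply: fsubst_over (form_over_skclos n (G_over Gg)) _ => i /mem_In /Hn.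
Qed.

Lemma GSIn_over_skclos m :
  (forall f, tfun (GSIn G m (skT L T)) f -> exists n, lfun (skclos L n) f) /\
  (forall A, tax (GSIn G m (skT L T)) A -> exists n, form_over (skclos L n) A).
Proof.
have new_axioms X : (forall A, X A -> exists n, form_over (skclos L n) A) ->
    forall f, (exists A, X A /\ occurs_form f A) -> exists n, lfun (skclos L n) f.
  by move=> HX f [A [/HX [n Hn] Ho]]; exists n; exact: form_over_occurs Ho Hn.
elim: m => [|m [IHf IHa]].
  have HskT A : skE T A -> exists n, form_over (skclos L n) A.
    by case=> B [HB ->]; exists (0 + fsize B); apply/skf_over_skclos/T_over.
  by split=> [f [Hf|/(new_axioms _ HskT)] | A [//|/HskT]] //; exists 0.
have Hnew A : skE (IND (minus (down G (tfun (GSIn G m (skT L T)))))) A ->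
    exists n, form_over (skclos L n) A.
  case=> _ [[phi [k [[[g [s [Gg [Hs ->]]]] _] ->]]] ->].
  have [n Hn] := Ix_instance_over_skclos k IHf Gg Hs.
  by exists (n + fsize (Ix (fsubst s g) k)); apply: skf_over_skclos.
by split=> [f [/IHf|/(new_axioms _ Hnew)] | A [/IHa|/Hnew]].
Qed.

End GSILanguage.

(** * Semantics of induction axioms *)

Definition upd (D : Type) (rho : nat -> D) (k : nat) (d : D) : nat -> D :=
  fun i => if i == k then d else rho i.

Section InductionSemantics.
Variable M : structure.
Implicit Types (rho : nat -> dom M) (d : dom M).

Lemma sat_ind_body rho phi k :
  sat rho (ind_body phi k) <->
  (sat (upd rho k (ifun zero [::])) phi /\
    (forall d, sat (upd rho k d) phi -> sat (upd rho k (ifun succ [:: d])) phi) ->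
   forall d, sat (upd rho k d) phi).
Proof.
pose phi' := fsubst (fun i => if i == k then Var 0 else Var i.+1) phi.
have E d rho' : sat (scons d rho') phi' <-> sat (upd rho' k d) phi.
  by rewrite sat_fsubst; apply: sat_ext => i /=; rewrite /upd; case: ifP.
have E0 : sat rho (inst phi' Tzero) <-> sat (upd rho k (ifun zero [::])) phi.
  by rewrite sat_inst E.
have ES d : sat (scons d rho)
      (fsubst (fun i => if i is j.+1 then Var j.+1 else Ts (Var 0)) phi')
    <-> sat (upd rho k (ifun succ [:: d])) phi.
  by rewrite sat_fsubst -E; apply: sat_ext => -[].
rewrite /ind_body /Imp /= -/phi'; split.
- case=> [Hn|Hall] [H0 Hst] d; last exact/E.
  exfalso; apply: Hn; split; first exact/E0.
  move=> d'; case: (classic (sat (scons d' rho) phi')) => h; [right|by left].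
  by apply/ES; apply: Hst; apply/E.
- move=> H; case: (classic (forall d, sat (upd rho k d) phi)) => Hc.
    by right=> d; apply/E.
  left=> -[H0 Hst]; apply: Hc; apply: H; split; first exact/E0.
  by move=> d /E Hd; apply/ES; case: (Hst d).
Qed.

Lemma sat_ind_body_notin rho phi k : k \notin fv_form phi -> sat rho (ind_body phi k).
Proof.
move=> Hk; apply/sat_ind_body => -[H0 _] d.
apply/(sat_eq_on_fv (rho := upd rho k (ifun zero [::]))) => // i Hi.
by rewrite /upd; case: eqP Hi => // ->; rewrite (negbTE Hk).
Qed.

Lemma sat_ind_body_fsubst rho rho' s phi k :
  s k = Var k -> (forall d i, i != k -> eval (upd rho k d) (s i) = rho' i) ->
  (sat rho (ind_body (fsubst s phi) k) <-> sat rho' (ind_body phi k)).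
Proof.
move=> Hk H; rewrite !sat_ind_body.
have E d : sat (upd rho k d) (fsubst s phi) <-> sat (upd rho' k d) phi.
  rewrite sat_fsubst; apply: sat_ext => i; rewrite {2}/upd.
  by case: eqP => [->|/eqP /H //]; rewrite Hk /= /upd eqxx.
split=> Hc [H0 Hst] d; apply/E; apply: Hc; split; try exact/E.
- by move=> d' /E /Hst /E.
- by move=> d' /E /Hst /E.
Qed.

Lemma sat_closeAll n A :
  (forall rho, sat rho (closeAll n A)) <-> (forall rho, sat rho A).
Proof.
elim: n => //= n IH; rewrite -IH; split=> H rho; last by move=> d; apply: H.
by apply/(sat_ext _ (rho' := scons (rho 0) (fun i => rho i.+1))) => [[]|]; last exact: H.
Qed.

End InductionSemantics.

(** * The canonical Skolem expansion *)

Section ReinterpretFunctions.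
Variables (M : structure) (I : Defs.fsym -> seq (dom M) -> dom M).
Let M' := Structure (inhab M) I (@ipred M).

Lemma eval_eq_ifun (rho : nat -> dom M) t :
  (forall f, occurs_term f t -> ifun f =1 I f) -> eval rho t = @eval M' rho t.
Proof.
elim/term_nested_ind: t => [i|f ts IH] // H.
rewrite !eval_App /= H; last by apply/occurs_term_App; left.
congr I; apply: map_ext_In => u Hu; apply: IH => // g Hg; apply: H.
by apply/occurs_term_App; right; exists u.
Qed.

Lemma sat_eq_ifun (rho : nat -> dom M) A :
  (forall f, occurs_form f A -> ifun f =1 I f) -> (sat rho A <-> @sat M' rho A).
Proof.
elim: A rho => /= [t u|p a ts|B IH|B IHB C IHC|B IHB C IHC|B IH|B IH] rho H.
- by rewrite !(@eval_eq_ifun rho) // => f Hf; apply: H; [right | left].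
- rewrite (@map_ext_In _ _ _ (@eval M' rho)) // => u Hu.
  by apply: eval_eq_ifun => f Hf; apply: H; exists u.
- by rewrite IH.
- by rewrite IHB ?IHC // => f Hf; apply: H; [right | left].
- by rewrite IHB ?IHC // => f Hf; apply: H; [right | left].
- by split=> Hd d; move: (Hd d); rewrite IH.
- by split=> -[d Hd]; exists d; move: Hd; rewrite IH.
Qed.

End ReinterpretFunctions.

Section SkolemExpansion.
Variables (L : lang) (M : structure).
Local Notation D := (dom M).

(* A Skolem symbol [FSk q B] outside [L] denotes a witness for [Ex B] (resp.
   a counterexample to [All B]) chosen in the expansion itself; this is a
   structural recursion because [B] is a subterm of the symbol. *)
Fixpoint skx_fun (f : Defs.fsym) (args : seq D) {struct f} : D :=
  match f with
  | FB n a => ifun (FB n a) args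
  | FSk q B =>
      if excluded_middle_informative (lfun L (FSk q B)) then ifun (FSk q B) args
      else epsilon (inhabits (inhab M)) (fun d => exists rho : nat -> D,
             map rho (fvs (Qnt q B)) = args /\
             (if q then skx_sat (scons d rho) B else ~ skx_sat (scons d rho) B))
  end
with skx_eval (rho : nat -> D) (t : term) {struct t} : D :=
  match t with
  | Var i => rho i
  | App f ts => skx_fun f ((fix el (l : list term) : seq D :=
                   match l with [::] => [::] | u :: l' => skx_eval rho u :: el l' end) ts)
  end
with skx_sat (rho : nat -> D) (A : form) {struct A} : Prop :=
  match A with
  | Eq t u => skx_eval rho t = skx_eval rho u
  | Pr p a ts => ipred p a (map (skx_eval rho) ts)
  | Neg B => ~ skx_sat rho B
  | And B C => skx_sat rho B /\ skx_sat rho C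
  | Or B C => skx_sat rho B \/ skx_sat rho C
  | All B => forall d, skx_sat (scons d rho) B
  | Ex B => exists d, skx_sat (scons d rho) B
  end.

Definition skolem_expansion : structure := Structure (inhab M) skx_fun (@ipred M).
Local Notation Mx := skolem_expansion.

Lemma skx_eval_eval (rho : nat -> D) t : skx_eval rho t = @eval Mx rho t.
Proof.
elim/term_nested_ind: t => [i|f ts IH] //.
rewrite eval_App /=; congr skx_fun; elim: ts IH => //= u l IHl IH.
by rewrite IH ?IHl //; [move=> v Hv; apply: IH; right | left].
Qed.

Lemma skx_sat_sat (rho : nat -> D) A : skx_sat rho A <-> @sat Mx rho A.
Proof.
elim: A rho => /= [t u|p a ts|B IH|B IHB C IHC|B IHB C IHC|B IH|B IH] rho.
- by rewrite !skx_eval_eval.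
- by rewrite (@map_ext_In _ _ _ (@eval Mx rho)) // => u _; rewrite skx_eval_eval.
- by rewrite IH.
- by rewrite IHB IHC.
- by rewrite IHB IHC.
- by split=> H d; apply/IH; apply: H.
- by split=> -[d H]; exists d; apply/IH.
Qed.

Lemma sat_expansion_L (rho : nat -> D) A :
  form_over L A -> (@sat Mx rho A <-> sat rho A).
Proof.
move=> HA; symmetry; apply: sat_eq_ifun => -[n a|q B] Ho args //=.
by case: excluded_middle_informative => // -[]; exact: form_over_occurs Ho HA.
Qed.

Lemma skx_fun_spec q B (args : seq D) d (rho : nat -> D) :
  ~ lfun L (FSk q B) -> map rho (fvs (Qnt q B)) = args ->
  (if q then skx_sat (scons d rho) B else ~ skx_sat (scons d rho) B) ->
  exists rho' : nat -> D, map rho' (fvs (Qnt q B)) = args /\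
    (if q then skx_sat (scons (skx_fun (FSk q B) args) rho') B
     else ~ skx_sat (scons (skx_fun (FSk q B) args) rho') B).
Proof.
move=> HB Hr Hd /=.
case: (excluded_middle_informative _) => //= _.
apply: (epsilon_spec _ (fun c => exists rho' : nat -> D, map rho' (fvs (Qnt q B)) = args /\
  (if q then skx_sat (scons c rho') B else ~ skx_sat (scons c rho') B))).
by exists d, rho.
Qed.

Lemma sat_inst_skterm q B (rho : nat -> D) : ~ lfun L (FSk q B) ->
  @sat Mx rho (inst B (skterm q B)) <-> @sat Mx rho (Qnt q B).
Proof.
move=> HB; rewrite sat_inst /skterm eval_App -map_comp.
have E rho' d : map rho' (fvs (Qnt q B)) = map rho (fvs (Qnt q B)) ->
    skx_sat (scons d rho') B <-> @sat Mx (scons d rho) B.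
  move=> /eq_in_map Hr; rewrite skx_sat_sat; apply: sat_eq_on_fv => -[|j] //= Hj.
  by apply: Hr; rewrite mem_fvs mem_fv_Qnt.
case: q HB E => HB E /=.
- split=> [Hc | [d /(E rho d erefl) Hd]]; first by eexists; exact: Hc.
  by have [rho' [/E Hr Hc]] := skx_fun_spec HB erefl Hd; apply/Hr.
- split=> [Hc d | ]; last exact.
  apply: NNPP => /(E rho d erefl) Hd.
  by have [rho' [/E Hr Hn]] := skx_fun_spec HB erefl Hd; apply/Hn/Hr.
Qed.

Hypothesis L_skolem_free : skolem_free L.

Lemma sat_skf_expansion fuel n q A (rho : nat -> D) : form_over (skclos L n) A ->
  @sat Mx rho (skf fuel q A) <-> @sat Mx rho A.
Proof.
elim: fuel n q A rho => [|fuel IH] n q A rho HA //.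
case: A HA => [t u|p a ts|B|B C|B C|B|B] HA //=; move: HA => /= HA.
- by rewrite (IH n).
- by case: HA => HB HC; rewrite (IH n _ _ _ HB) (IH n _ _ _ HC).
- by case: HA => HB HC; rewrite (IH n _ _ _ HB) (IH n _ _ _ HC).
- case: q; first by split=> Hd d; apply/(IH n _ _ _ HA); apply: Hd.
  rewrite (IH n.+1 _ _ _ (inst_skterm_over_skclos (q := false) HA)).
  by apply: sat_inst_skterm; exact: (skclos_Skolem_notin (q := false) L_skolem_free HA).
- case: q => /=; last by split=> -[d Hd]; exists d; move: Hd; rewrite (IH n _ _ _ HA).
  rewrite (IH n.+1 _ _ _ (inst_skterm_over_skclos (q := true) HA)).
  by apply: sat_inst_skterm; exact: (skclos_Skolem_notin (q := true) L_skolem_free HA).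
Qed.

End SkolemExpansion.

Section ExpansionModelsGSI.
Variables (L : lang) (T G : form -> Prop).
Hypotheses (L_skolem_free : skolem_free L) (L_zero : lfun L zero) (L_succ : lfun L succ)
  (T_over : forall A, T A -> form_over L A) (G_over : forall A, G A -> form_over L A).
Variable M : structure.
Hypothesis M_T_IND : forall A, T A \/ IND G A -> forall rho : nat -> dom M, sat rho A.
Local Notation Mx := (skolem_expansion L M).

Lemma expansion_ind_body g k (rho : nat -> dom M) : G g -> @sat Mx rho (ind_body g k).
Proof.
move=> Gg; move: rho; apply/(sat_closeAll Mx) => rho.
apply/sat_expansion_L; first exact: Ix_over (G_over Gg).
by apply: M_T_IND; right; exists g, k.
Qed.

Lemma expansion_Ix_instance g s k (rho : nat -> dom M) : G g ->
  (forall i, s i = Var i \/ fv_term (s i) = [::]) -> @sat Mx rho (Ix (fsubst s g) k).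
Proof.
move=> Gg Hs; move: rho; apply/(sat_closeAll Mx) => rho.
case: (Hs k) => [Hk|Hk].
  apply/(sat_ind_body_fsubst (rho' := fun i => @eval Mx rho (s i))) => // [d i Hik|].
    by case: (Hs i) => [->|/eval_ground //]; rewrite /= /upd (negbTE Hik).
  exact: expansion_ind_body.
apply: sat_ind_body_notin; apply/negP => /fv_fsubst [j _].
case: (Hs j) => [Ej|->] //; rewrite Ej inE => /eqP Ekj.
by rewrite Ekj Ej in Hk.
Qed.

Lemma expansion_GSIn m A (rho : nat -> dom M) : tax (GSIn G m (skT L T)) A -> @sat Mx rho A.
Proof.
elim: m A rho => [|m IH] A rho.
  case=> // -[B [HB ->]]; rewrite /sk (@sat_skf_expansion _ _ L_skolem_free _ 0).
    by apply/sat_expansion_L; [exact: T_over | apply: M_T_IND; left].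
  exact: T_over.
case=> [/IH //|[_ [[phi [k [[[g [s [Gg [Hs ->]]]] _] ->]]] ->]]].
have [n Hn] := Ix_instance_over_skclos L_zero L_succ G_over k
  (proj1 (GSIn_over_skclos L_zero L_succ T_over G_over m)) Gg Hs.
rewrite /sk (@sat_skf_expansion _ _ L_skolem_free _ n) //.
by apply: expansion_Ix_instance => // i; case: (Hs i) => [|[]]; [left | right].
Qed.

End ExpansionModelsGSI.

(** * The substructure of named elements *)

Section GroundTermSubstructure.
Variables (L : lang) (T G : form -> Prop).
Hypotheses (L_zero : lfun L zero) (L_succ : lfun L succ)
  (T_over : forall A, T A -> form_over L A) (G_over : forall A, G A -> form_over L A).
Variable M : structure.
Hypothesis M_GSI : forall A, GSIomega G (skT L T) A -> forall rho : nat -> dom M, sat rho A.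

Local Notation Tn m := (GSIn G m (skT L T)).

Definition gsi_symbol (f : Defs.fsym) : Prop := exists m, tfun (Tn m) f.
Definition gsi_lang : lang := Lang gsi_symbol (fun _ _ => True).

Lemma tfun_GSIn_mono m m' f : m <= m' -> tfun (Tn m) f -> tfun (Tn m') f.
Proof.
elim: m' => [|m' IH]; first by rewrite leqn0 => /eqP ->.
by rewrite leq_eqVlt => /orP [/eqP -> //|]; rewrite ltnS => /IH H /H; left.
Qed.

Lemma ground_over_GSIn_mono m m' t :
  m <= m' -> ground_over (tfun (Tn m)) t -> ground_over (tfun (Tn m')) t.
Proof.
by move=> Hm [Ht Ho]; split=> //; apply: term_over_mono Ho => f; apply: tfun_GSIn_mono.
Qed.

Lemma occurs_GSIn m A f : tax (Tn m) A -> occurs_form f A -> tfun (Tn m) f.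
Proof.
elim: m A => [|m IH] A; first by case=> // HA Ho; right; exists A.
by case=> [HA|HA] Ho; [left; exact: IH HA Ho | right; exists A].
Qed.

Lemma GSIn_over_gsi_lang m A : tax (Tn m) A -> form_over gsi_lang A.
Proof.
move=> HA; have [n Hn] := (GSIn_over_skclos L_zero L_succ T_over G_over m).2 A HA.
by apply: form_over_of_occurs Hn _ => // f Ho; exists m; exact: occurs_GSIn HA Ho.
Qed.

Let rho0 : nat -> dom M := fun _ => inhab M.

Definition named (d : dom M) : Prop :=
  exists m t, ground_over (tfun (Tn m)) t /\ eval rho0 t = d.

Lemma named_seq (args : seq (dom M)) : (forall a, List.In a args -> named a) ->
  exists m ts, (forall u, List.In u ts -> ground_over (tfun (Tn m)) u) /\
               map (eval rho0) ts = args.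
Proof.
elim: args => [|a l IH] H; first by exists 0, [::].
have [m1 [t [Ht Et]]] := H a (or_introl erefl).
have [|m2 [ts [Hts Ets]]] := IH; first by move=> b Hb; apply: H; right.
exists (maxn m1 m2), (t :: ts); split; last by rewrite /= Et Ets.
move=> u /= [<-|Hu]; first by apply: ground_over_GSIn_mono Ht; rewrite leq_maxl.
by apply: ground_over_GSIn_mono (Hts u Hu); rewrite leq_maxr.
Qed.

Lemma fv_terms_nil ts : (forall u, List.In u ts -> fv_term u = [::]) -> fv_terms ts = [::].
Proof.
rewrite /fv_terms; elim: ts => [|u l IH] H //=.
by rewrite (H u (or_introl erefl)) IH // => v Hv; apply: H; right.
Qed.

Lemma named_ifun f (args : seq (dom M)) : gsi_symbol f -> size args = arity f ->
  (forall a, List.In a args -> named a) -> named (ifun f args).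
Proof.
move=> [m0 Hf] Hsz /named_seq [m [ts [Gts Ets]]].
exists (maxn m0 m), (App f ts); split; last by rewrite eval_App Ets.
split; first by rewrite fv_term_App; apply: fv_terms_nil => u /Gts [].
apply/term_over_App; split.
- by apply: tfun_GSIn_mono Hf; rewrite leq_maxl.
- by rewrite -Hsz -Ets size_map.
- by move=> u /Gts /(ground_over_GSIn_mono (leq_maxr m0 m)) [].
Qed.

Definition named_dom := {d : dom M | named d}.

Lemma named_dom_inj (x y : named_dom) : sval x = sval y -> x = y.
Proof. by case: x y => x px [y py] /= E; subst y; rewrite (proof_irrelevance _ px py). Qed.

Lemma named_zero : named (eval rho0 Tzero).
Proof. by exists 0, Tzero; split=> //; split=> //; split=> //; left. Qed.

Lemma named_args (args : seq named_dom) a :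
  List.In a (map sval args) -> named a.
Proof. by move=> Ha; have [d _ ->] := In_map_inv Ha; exact: proj2_sig. Qed.

(* Symbols outside the GSI languages, or applied to the wrong number of
   arguments, get the junk value [0]. *)
Definition named_ifun_dom (f : Defs.fsym) (args : seq named_dom) : named_dom :=
  match excluded_middle_informative (gsi_symbol f /\ size args = arity f) with
  | left h => exist _ (ifun f (map sval args))
                (named_ifun h.1 (etrans (size_map _ _) h.2) (@named_args args))
  | right _ => exist _ _ named_zero
  end.

Definition named_substructure : structure :=
  Structure (exist _ _ named_zero) named_ifun_dom (fun p a args => ipred p a (map sval args)).
Local Notation N := named_substructure.

Lemma sval_eval_named t (rho : nat -> named_dom) (rhoM : nat -> dom M) :
  term_over gsi_symbol t -> (forall i, sval (rho i) = rhoM i) ->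
  sval (@eval N rho t) = eval rhoM t.
Proof.
move=> Ht Hr; elim/term_nested_ind: t Ht => [i|f ts IH]; first by move=> _; apply: Hr.
case/term_over_App=> Hf Hsz Hts; rewrite !eval_App /= /named_ifun_dom.
case: excluded_middle_informative => [_|[]] /=; last by rewrite size_map.
rewrite -map_comp; congr ifun; apply: map_ext_In => u Hu /=; exact: IH (Hts u Hu).
Qed.

Lemma sat_named_universal A b (rho : nat -> named_dom) (rhoM : nat -> dom M) :
  form_over gsi_lang A -> universal b A -> (forall i, sval (rho i) = rhoM i) ->
  if b then sat rhoM A -> @sat N rho A else @sat N rho A -> sat rhoM A.
Proof.
elim: A b rho rhoM => /= [t u|p a ts|B IH|B IHB C IHC|B IHB C IHC|B IH|B IH]
  b rho rhoM HA Hb Hr.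
- case: HA => Ht Hu.
  have E : @eval N rho t = @eval N rho u <-> eval rhoM t = eval rhoM u.
    rewrite -(sval_eval_named Ht Hr) -(sval_eval_named Hu Hr); split=> [-> //|].
    exact: named_dom_inj.
  by case: b {Hb}; rewrite E.
- case: HA => _ [_ H].
  rewrite -map_comp (@map_ext_In _ _ _ (eval rhoM)); first by case: b {Hb}.
  by move=> u Hu /=; apply: sval_eval_named => //; apply: H.
- by have := IH (~~ b) rho rhoM HA Hb Hr; case: b {Hb} => /= H Hn Hx; apply: Hn; exact: H.
- case/andP: Hb => HbB HbC; case: HA => HB HC.
  have := IHB b rho rhoM HB HbB Hr; have := IHC b rho rhoM HC HbC Hr.
  by case: b {HbB HbC} => /= H2 H1 [h1 h2]; split; auto.
- case/andP: Hb => HbB HbC; case: HA => HB HC.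
  have := IHB b rho rhoM HB HbB Hr; have := IHC b rho rhoM HC HbC Hr.
  by case: b {HbB HbC} => /= H2 H1 [h|h]; auto.
- case/andP: Hb => /= -> HbB H d.
  by have := IH true (@scons N d rho) (scons (sval d) rhoM) HA HbB; apply=> // -[].
- case/andP: Hb => /= /negbTE Eb HbB; rewrite Eb in HbB *.
  case=> d Hd; exists (sval d).
  by have := IH false (@scons N d rho) (scons (sval d) rhoM) HA HbB; apply=> // -[].
Qed.

Lemma sat_named_of_sk m B (rho : nat -> named_dom) :
  tax (Tn m) (sk true B) -> @sat N rho B.
Proof.
move=> HB; apply: sat_sk.
apply: (@sat_named_universal _ true rho (fun i => sval (rho i))) => //.
- exact: GSIn_over_gsi_lang HB.
- exact: universal_skf.
- by apply: M_GSI; exists m.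
Qed.

Lemma named_T A (rho : nat -> named_dom) : T A -> @sat N rho A.
Proof. by move=> HA; apply: (@sat_named_of_sk 0); right; exists A. Qed.

Lemma ground_names (rho : nat -> named_dom) (l : seq nat) : exists m (s : nat -> term),
  forall i, i \in l -> ground_over (tfun (Tn m)) (s i) /\ eval rho0 (s i) = sval (rho i).
Proof.
elim: l => [|a l [m [s Hs]]]; first by exists 0, Var.
have [ma [t [Ht Et]]] := proj2_sig (rho a).
exists (maxn ma m), (fun i => if i == a then t else s i) => i; rewrite inE.
case: eqP => [-> _|_ /Hs [Hi Ei]]; split=> //.
  by apply: ground_over_GSIn_mono Ht; rewrite leq_maxl.
by apply: ground_over_GSIn_mono Hi; rewrite leq_maxr.
Qed.

Lemma named_IND A (rho : nat -> named_dom) : IND G A -> @sat N rho A.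
Proof.
case=> g [k [Gg ->]]; move: rho; apply/(sat_closeAll N) => rho.
have [m [s Hs]] := ground_names rho (fv_form g).
pose s' i := if (i != k) && (i \in fv_form g) then s i else Var i.
have Hs'k : s' k = Var k by rewrite /s' eqxx.
have Hs' i : s' i = Var i \/ ground_over (tfun (Tn m)) (s' i).
  rewrite /s'; case: ifP => [/andP [_ /Hs [Hi _]]|_]; [right | left] => //.
have Hax : tax (Tn m.+1) (sk true (Ix (fsubst s' g) k)).
  right; exists (Ix (fsubst s' g) k); split=> //; exists (fsubst s' g), k; split=> //.
  split; first by exists g, s'.
  apply: (@size_undup_le1 _ _ k) => x /fv_fsubst [j Hj].
  rewrite /s' Hj andbT inE; case: eqP => [-> /[!inE] //|_ /=].
  by case/Hs: Hj => -[-> _].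
apply/(sat_ind_body_fsubst (s := s') (rho := rho)) => // [d i Hik|].
  rewrite /s'; case: ifP => [/andP [_ /Hs [[Hi Ho] Ei]]|] /=; last first.
    by rewrite Hik /upd (negbTE Hik).
  apply: named_dom_inj.
  rewrite (@sval_eval_named _ _ (fun j => sval (upd rho k d j))) //.
    by rewrite (eval_ground _ rho0 Hi) Ei.
  by apply: term_over_mono Ho => f Hf; exists m.
have /(sat_closeAll N) := fun rho' => @sat_named_of_sk _ _ rho' Hax.
by apply.
Qed.

End GroundTermSubstructure.

Theorem proposition14 (L : lang) (T G : form -> Prop) :
  skolem_free L ->
  lfun L zero -> lfun L succ ->
  (forall A, T A -> form_over L A /\ sentence A) ->
  (forall A, G A -> form_over L A) ->
  (inconsistent (GSIomega G (skT L T)) <->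
   inconsistent (fun A => T A \/ IND G A)).
Proof.
move=> L_skolem_free L_zero L_succ T_sentences G_over.
have T_over A : T A -> form_over L A by case/T_sentences.
split=> Hinc [M HM]; apply: Hinc.
- exists (skolem_expansion L M) => A [m HA] rho.
  exact: (expansion_GSIn L_skolem_free L_zero L_succ T_over G_over HM rho HA).
- exists (named_substructure T G L_zero M) => A [HA|HA] rho.
  + exact: (named_T L_zero L_succ T_over G_over HM rho HA).
  + exact: (named_IND L_zero L_succ T_over G_over HM rho HA).
Qed.
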